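(* For a finite set of types $T$ and a positive integer $n$, $\gamma(\mathcal{G}_T^n)\ge\mathrm{GPoA}(\mathcal{G}_T^n)$.
   Context: Fix a positive integer $n$ and a finite set of resource types $T=\{(c_1,f_1),\dots,(c_m,f_m)\}$, $c_t,f_t:\{1,\dots,n\}\to\mathbb{R}$, extended by $c_t(0)=f_t(0)=f_t(n+1)=0$. The class $\mathcal{G}_T^n$ consists of all local resource allocation games: agent set $N=\{1,\dots,n\}$; finite resource set $\mathcal{R}$; for each $r$ a value $v_r\ge0$ and a type $(c,f)\in T$, with $c_r=v_rc$, $f_r=v_rf$; action sets $\mathcal{A}_i\subseteq2^{\mathcal{R}}$, $\mathcal{A}=\prod_i\mathcal{A}_i$; $|a|_r$ = number of agents $i$ with $r\in a_i$; $C(a)=\sum_rc_r(|a|_r)$, $J_i(a)=\sum_{r\in a_i}f_r(|a|_r)$. $\mathrm{GPoA}(\mathcal{G}_T^n)=\inf\{\lambda/(1-\mu):\lambda>0,\mu<1\}$ over $(\lambda,\mu)$ such that for every $G\in\mathcal{G}_T^n$ and all $a,a'\in\mathcal{A}$: $\sum_iJ_i(a'_i,a_{-i})-\sum_iJ_i(a)+C(a)\le\lambda C(a')+\mu C(a)$. With $\mathbb{N}=\{0,1,\dots\}$, $\mathcal{I}=\{(x,y,z)\in\mathbb{N}^3:1\le x+y-z\le n,\ z\le\min\{x,y\}\}$ and $\mathcal{I}_{\mathcal{R}}=\{(x,y,z)\in\mathcal{I}:x+y-z=n\text{ or }(x-z)(y-z)z=0\}$. $\mathcal{S}(\mathcal{G}_T^n)$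 is the set of $(\lambda,\mu)$ with $\lambda>0$, $\mu<1$ such that for all $(c,f)\in T$ and all $(x,y,z)\in\mathcal{I}_{\mathcal{R}}$: $(z-x)f(x)+(y-z)f(x+1)+c(x)\le\lambda c(y)+\mu c(x)$. Define $\gamma(\mathcal{G}_T^n)=\inf\{\lambda/(1-\mu):(\lambda,\mu)\in\mathcal{S}(\mathcal{G}_T^n)\}$. *)

From mathcomp Require Import all_boot all_order all_algebra.
From mathcomp Require Import all_classical all_reals ereal.
Set Implicit Arguments. Unset Strict Implicit. Unset Printing Implicit Defensive.
Import Order.TTheory GRing.Theory Num.Theory.
Local Open Scope ring_scope.
Local Open Scope classical_set_scope.

Section Defs.
Variable R : realType.

(* A resource type is a pair (c, f) of functions; only their values on
   {1,...,n} matter; they are extended by 0 outside (c(0)=f(0)=f(n+1)=0). *)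
Definition rtype := ((nat -> R) * (nat -> R))%type.

Definition ext (n : nat) (g : nat -> R) (k : nat) : R :=
  if (1 <= k <= n)%N then g k else 0.

Definition load (n : nat) (Res : finType) (a : 'I_n -> {set Res}) (r : Res) : nat :=
  #|[set i : 'I_n | r \in a i]|.

Definition dev (n : nat) (Res : finType) (a : 'I_n -> {set Res}) (i : 'I_n)
  (s : {set Res}) : 'I_n -> {set Res} := fun j => if j == i then s else a j.

Definition welfare (n : nat) (Res : finType) (v : Res -> R) (typ : Res -> rtype)
  (a : 'I_n -> {set Res}) : R :=
  \sum_(r : Res) v r * ext n (typ r).1 (load a r).

Definition utility (n : nat) (Res : finType) (v : Res -> R) (typ : Res -> rtype)
  (a : 'I_n -> {set Res}) (i : 'I_n) : R :=
  \sum_(r in a i) v r * ext n (typ r).2 (load a r).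

Definition game_feasible (n : nat) (T : set rtype) (l m : R) : Prop :=
  forall (Res : finType) (v : Res -> R) (typ : Res -> rtype)
         (A : 'I_n -> {set {set Res}}) (a a' : 'I_n -> {set Res}),
    (forall r, 0 <= v r) -> (forall r, T (typ r)) ->
    (forall i, a i \in A i) -> (forall i, a' i \in A i) ->
    \sum_(i < n) utility v typ (dev a i (a' i)) i
      - \sum_(i < n) utility v typ a i + welfare v typ a
    <= l * welfare v typ a' + m * welfare v typ a.

Definition GPoA (n : nat) (T : set rtype) : \bar R :=
  ereal_inf [set (p.1 / (1 - p.2))%:E | p in
    [set p : R * R | 0 < p.1 /\ p.2 < 1 /\ game_feasible n T p.1 p.2]].

Definition in_I (n x y z : nat) : bool :=
  [&& (1 <= x + y - z)%N, (x + y - z <= n)%N & (z <= minn x y)%N].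

Definition in_IR (n x y z : nat) : bool :=
  in_I n x y z && (((x + y - z)%N == n) || ((x - z) * (y - z) * z == 0)%N).

Definition S_feasible (n : nat) (T : set rtype) (l m : R) : Prop :=
  forall cf : rtype, T cf -> forall x y z : nat, in_IR n x y z ->
    (z%:R - x%:R) * ext n cf.2 x + (y%:R - z%:R) * ext n cf.2 x.+1 + ext n cf.1 x
    <= l * ext n cf.1 y + m * ext n cf.1 x.

Definition gamma (n : nat) (T : set rtype) : \bar R :=
  ereal_inf [set (p.1 / (1 - p.2))%:E | p in
    [set p : R * R | 0 < p.1 /\ p.2 < 1 /\ S_feasible n T p.1 p.2]].

End Defs.

From mathcomp Require Import all_boot all_order all_algebra.
From mathcomp Require Import all_classical all_reals ereal.
From mathcomp Require Import lra zify.
Set Implicit Arguments. Unset Strict Implicit. Unset Printing Implicit Defensive.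
Import Order.TTheory GRing.Theory Num.Theory.

(* Every (lambda, mu) in S is feasible for the smoothness condition over all
   games, so the infimum defining GPoA ranges over a superset of the one
   defining gamma.  Summing the game condition resource by resource, resource
   r contributes v_r times the inequality of S at (x, y, z) = (|a|_r, |a'|_r,
   number of agents using r in both a and a'), where (x, y, z) lies in I but
   possibly not in I_R.  For fixed x and y the left-hand side is affine in z
   with slope f(x) - f(x+1), so it is maximised at an end of the admissible
   range max(0, x+y-n) <= z <= min(x, y), and both ends lie in I_R. *)

Local Open Scope ring_scope.

Section SmoothnessInequality.
Variables (R : realType) (n : nat).

Definition smooth_ineq (cf : rtype R) (l m : R) (x y z : nat) : Prop :=
  (z%:R - x%:R) * ext n cf.2 x + (y%:R - z%:R) * ext n cf.2 x.+1 + ext n cf.1 x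
  <= l * ext n cf.1 y + m * ext n cf.1 x.

Lemma smooth_ineq_slope {cf l m x y z z0} :
  smooth_ineq cf l m x y z0 ->
  (z%:R - z0%:R) * (ext n cf.2 x - ext n cf.2 x.+1) <= 0 ->
  smooth_ineq cf l m x y z.
Proof. by rewrite /smooth_ineq; lra. Qed.

Lemma S_feasible_smooth_ineq (T : set (rtype R)) l m cf x y z :
  S_feasible n T l m -> T cf -> (z <= minn x y)%N -> (x + y - z <= n)%N ->
  smooth_ineq cf l m x y z.
Proof.
move=> Sf Tcf zxy xyn.
have [xy0|xy_pos] := eqVneq (x + y - z)%N 0%N.
  have [-> -> ->] : [/\ x = 0%N, y = 0%N & z = 0%N] by split; lia.
  by rewrite /smooth_ineq /ext /=; lra.
have [d_ge0|d_lt0] := lerP 0 (ext n cf.2 x - ext n cf.2 x.+1).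
- have IR_min : in_IR n x y (minn x y).
    rewrite /in_IR /in_I; apply/andP; split; first by apply/and3P; split; lia.
    apply/orP; right; rewrite !muln_eq0.
    by case: (leqP x y) => h; apply/orP; left; apply/orP; [left|right]; lia.
  apply: (smooth_ineq_slope (Sf cf Tcf x y _ IR_min)).
  by rewrite mulr_le0_ge0 // subr_le0 ler_nat.
- have IR_max : in_IR n x y (x + y - n)%N.
    rewrite /in_IR /in_I; apply/andP; split; first by apply/and3P; split; lia.
    by apply/orP; case: (leqP n (x + y)) => h; [left | right]; apply/eqP; lia.
  apply: (smooth_ineq_slope (Sf cf Tcf x y _ IR_max)).
  by rewrite mulr_ge0_le0 ?subr_ge0 ?ler_nat; [|lia|lra].
Qed.

Lemma smooth_ineq_scale cf l m x y z (c : R) :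
  0 <= c -> (z <= y)%N -> smooth_ineq cf l m x y z ->
  c * ext n cf.2 x *+ z + c * ext n cf.2 x.+1 *+ (y - z)
    - c * ext n cf.2 x *+ x + c * ext n cf.1 x
  <= l * (c * ext n cf.1 y) + m * (c * ext n cf.1 x).
Proof.
move=> c_ge0 zy /(ler_wpM2l c_ge0).
by rewrite -!(mulr_natr (c * _)) natrB //; lra.
Qed.

Lemma S_feasible_smooth_ineq_cards (T : set (rtype R)) l m cf (A B : {set 'I_n}) :
  S_feasible n T l m -> T cf -> smooth_ineq cf l m #|B| #|A| #|A :&: B|.
Proof.
move=> Sf Tcf; apply: S_feasible_smooth_ineq Sf Tcf _ _.
  by rewrite leq_min !subset_leq_card ?subsetIl ?subsetIr.
have : (#|A :|: B| <= n)%N by apply: leq_trans (max_card _) _; rewrite card_ord.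
have := cardsUI A B; lia.
Qed.

End SmoothnessInequality.

Section GameSums.
Variables (R : realType) (n : nat) (Res : finType) (v : Res -> R) (typ : Res -> rtype R).

Lemma loadE (a : 'I_n -> {set Res}) r : load a r = #|[set i | r \in a i]|.
Proof. by apply: eq_card => i; rewrite inE; apply/idP/idP => [/set_mem|/mem_set]. Qed.

Lemma load_dev (a : 'I_n -> {set Res}) i (s : {set Res}) r :
  r \in s -> load (dev a i s) r = (load a r + (r \notin a i))%N.
Proof.
move=> rs; rewrite !loadE.
have -> : [set j | r \in dev a i s j] = i |: [set j | r \in a j].
  by apply/setP => j; rewrite !inE /dev; case: eqP => [->|_]; rewrite ?rs ?eqxx.
by rewrite cardsU1 inE addnC.
Qed.

Lemma sum_utility (a : 'I_n -> {set Res}) :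
  \sum_(i < n) utility v typ a i =
  \sum_r v r * ext n (typ r).2 (load a r) *+ load a r.
Proof.
rewrite /utility (exchange_big_dep predT) //=; apply: eq_bigr => r _.
by rewrite [X in _ *+ X]loadE -sumr_const; apply: eq_bigl => i; rewrite inE.
Qed.

Lemma sum_utility_dev (a a' : 'I_n -> {set Res}) :
  \sum_(i < n) utility v typ (dev a i (a' i)) i =
  \sum_r (v r * ext n (typ r).2 (load a r) *+
            #|[set i | r \in a' i] :&: [set i | r \in a i]|
          + v r * ext n (typ r).2 (load a r).+1 *+
            #|[set i | r \in a' i] :\: [set i | r \in a i]|).
Proof.
rewrite /utility.
under eq_bigr => i _ do rewrite {1}/dev eqxx.
rewrite (exchange_big_dep predT) //=; apply: eq_bigr => r _.
rewrite (eq_bigl (fun i => i \in [set i | r \in a' i])); last by move=> i; rewrite inE.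
rewrite (big_setID [set i | r \in a i]) -!sumr_const /=.
congr (_ + _); apply: eq_bigr => i; rewrite !inE.
- by case/andP=> ra' ra; rewrite load_dev // ra addn0.
- by case/andP=> /negbTE nra ra'; rewrite load_dev // nra addn1.
Qed.

End GameSums.

Lemma S_feasible_game_feasible (R : realType) n (T : set (rtype R)) l m :
  S_feasible n T l m -> game_feasible n T l m.
Proof.
move=> Sf Res v typ A a a' v_ge0 Ttyp _ _.
rewrite sum_utility_dev sum_utility /welfare -sumrB -big_split /=.
rewrite !mulr_sumr -big_split /=; apply: ler_sum => r _.
set B := [set i | r \in a i]; set A' := [set i | r \in a' i].
rewrite cardsD !loadE -/B -/A'.
apply: smooth_ineq_scale (v_ge0 r) _ (S_feasible_smooth_ineq_cards A' B Sf (Ttyp r)).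
by rewrite subset_leq_card ?subsetIl.
Qed.

Local Open Scope classical_set_scope.

Theorem lemma2 (R : realType) (n : nat) (T : set (rtype R)) :
  (0 < n)%N -> finite_set T -> (GPoA n T <= gamma n T)%E.
Proof.
move=> _ _; apply: le_ereal_inf_tmp => _ [p [l_gt0 [m_lt1 Sp]] <-].
apply: ereal_inf_lbound; exists p => //.
by split; [|split; last exact: S_feasible_game_feasible Sp].
Qed.
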